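(* Let $N\ge 1$ be an integer, $0<\lambda<1$, $\nu=1-\lambda$ and $0<\delta\le 1$. Then $F(N,\delta,\lambda)=\zeta(N,\delta,\lambda)/\delta$, where $$\zeta(N,\delta,\lambda)=\begin{cases}0,& \delta\le \lambda^N,\\ \zeta(N,\delta,\lambda,k_* ),&\delta>\lambda^N,\end{cases}\qquad \zeta(N,\delta,\lambda,k):=\frac{\lambda\{\delta[1+(N-k)\nu]-\lambda^k\}}{\nu(k\nu+N\lambda)},$$ and $k_*$ is the largest nonnegative integer $k$ satisfying $(N+1-k)\lambda^k+k\lambda^{k-1}\ge (N+1)\delta$ (with the convention that the left-hand side equals $N+1$ for $k=0$).
   Context: Let $\mathcal H$ be a Hilbert space of finite dimension $D\ge 2$ and $|\Psi\rangle\in\mathcal H$ a unit vector. For $0\le\lambda<1$ let $\Omega_\lambda=|\Psi\rangle\langle\Psi|+\lambda(1-|\Psi\rangle\langle\Psi|)$ (a homogeneous strategy). For an integer $N\ge1$ and a density operator $\rho$ on $\mathcal H^{\otimes(N+1)}$ put $p_\rho=\mathrm{tr}[(\Omega_\lambda^{\otimes N}\otimes 1)\rho]$ and $f_\rho=\mathrm{tr}[(\Omega_\lambda^{\otimes N}\otimes|\Psi\rangle\langle\Psi|)\rho]$. With minimization over permutation-invariant density operators $\rho$ on $\mathcal H^{\otimes(N+1)}$, define $\zeta(N,\delta,\lambda)=\min\{f_\rho: p_\rho\ge\delta\}$ for $0\le\delta\le1$ and $F(N,\delta,\lambda)=\min\{f_\rho/p_\rho: p_\rho\ge\delta\}$ for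 $0<\delta\le1$. *)

From HB Require Import structures.
From mathcomp Require Import all_boot all_order all_algebra perm.
From mathcomp Require Import reals.
From mathcomp.real_closed Require Import complex.
Set Implicit Arguments. Unset Strict Implicit. Unset Printing Implicit Defensive.
Import Order.TTheory GRing.Theory Num.Theory.
Local Open Scope ring_scope.

(* Multi-indices of H^{(x) n}, H = C^D : functions from the n tensor
   factors to basis labels of C^D.  Operators on H^{(x) n} are square
   matrices indexed by 'I_#|multi-indices| (#| | = D^n); entry (i, j)
   corresponds to the multi-indices (enum_val i, enum_val j). *)
Notation midx D n := {ffun 'I_n -> 'I_D}.
Notation opT R D n := 'M[R[i]]_(#|{: midx D n}|).

Section QDefs.
Variable R : realType.
Local Notation C := R[i].

Definition adj m n (A : 'M[C]_(m, n)) : 'M[C]_(n, m) := map_mx Num.conj A^T.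

Definition tensop D n (A : 'I_n -> 'M[C]_D) : opT R D n :=
  \matrix_(i, j) \prod_(k < n)
     A k ((enum_val i : midx D n) k) ((enum_val j : midx D n) k).

Definition proj D (Psi : 'cV[C]_D) : 'M[C]_D := Psi *m adj Psi.

Definition unit_vector D (Psi : 'cV[C]_D) : Prop := (adj Psi *m Psi) 0 0 = 1.

Definition Omega D (Psi : 'cV[C]_D) (lam : R) : 'M[C]_D :=
  proj Psi + (lam%:C)%C *: (1%:M - proj Psi).

Definition density_op m (rho : 'M[C]_m) : Prop :=
  [/\ adj rho = rho,
      (forall v : 'cV[C]_m, 0 <= (adj v *m rho *m v) 0 0)
    & \tr rho = 1].

Definition perm_invariant D n (rho : opT R D n) : Prop :=
  forall (s : 'S_n) (a b : midx D n),
    rho (enum_rank a) (enum_rank b)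
    = rho (enum_rank [ffun k => a (s k)]) (enum_rank [ffun k => b (s k)]).

Definition OmN_tens D (Psi : 'cV[C]_D) (lam : R) N (X : 'M[C]_D) : opT R D N.+1 :=
  tensop (fun k : 'I_N.+1 => if (k < N)%N then Omega Psi lam else X).

Definition p_rho D (Psi : 'cV[C]_D) (lam : R) N (rho : opT R D N.+1) : R :=
  complex.Re (\tr (OmN_tens Psi lam N 1%:M *m rho)).

Definition f_rho D (Psi : 'cV[C]_D) (lam : R) N (rho : opT R D N.+1) : R :=
  complex.Re (\tr (OmN_tens Psi lam N (proj Psi) *m rho)).

Definition feasible D (Psi : 'cV[C]_D) (lam : R) N (delta : R) (rho : opT R D N.+1) :=
  [/\ density_op rho, perm_invariant rho & delta <= p_rho Psi lam rho].

Definition IsMin (S : R -> Prop) (x : R) : Prop := S x /\ forall y, S y -> x <= y.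

(* values f_rho over feasible rho (minimum = zeta(N, delta, lambda)) *)
Definition zeta_values D (Psi : 'cV[C]_D) (lam : R) (N : nat) (delta : R) : R -> Prop :=
  fun x => exists rho : opT R D N.+1, feasible Psi lam delta rho /\ x = f_rho Psi lam rho.

(* values f_rho / p_rho over feasible rho (minimum = F(N, delta, lambda)) *)
Definition F_values D (Psi : 'cV[C]_D) (lam : R) (N : nat) (delta : R) : R -> Prop :=
  fun x => exists rho : opT R D N.+1, feasible Psi lam delta rho /\
                       x = f_rho Psi lam rho / p_rho Psi lam rho.

Definition kstar_lhs (N k : nat) (lam : R) : R :=
  if k == 0%N then N.+1%:R
  else (N.+1%:R - k%:R) * lam ^+ k + k%:R * lam ^+ k.-1.

Definition is_kstar (N : nat) (delta lam : R) (ks : nat) : Prop :=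
  N.+1%:R * delta <= kstar_lhs N ks lam /\
  forall k : nat, N.+1%:R * delta <= kstar_lhs N k lam -> (k <= ks)%N.

Definition zeta_k (N : nat) (delta lam : R) (k : nat) : R :=
  let nu := 1 - lam in
  lam * (delta * (1 + (N%:R - k%:R) * nu) - lam ^+ k)
  / (nu * (k%:R * nu + N%:R * lam)).

Definition zeta_formula (N : nat) (delta lam : R) (ks : nat) : R :=
  if delta <= lam ^+ N then 0 else zeta_k N delta lam ks.

End QDefs.

From HB Require Import structures.
From mathcomp Require Import all_boot all_order all_algebra perm.
From mathcomp Require Import reals.
From mathcomp.real_closed Require Import complex.
From mathcomp Require Import ring lra.
Set Implicit Arguments. Unset Strict Implicit. Unset Printing Implicit Defensive.
Import Order.TTheory GRing.Theory Num.Theory Order.NatMonotonyTheory.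
Local Open Scope ring_scope.

(* Let P = |Psi><Psi|, Q = 1 - P and, for a set A of tensor factors, Pi_A the
   product projector with Q on the factors in A and P on the others.  The Pi_A
   are orthogonal and sum to 1, and Omega^(x)N (x) X is diagonal in them for
   X = 1 and X = P.  Averaging over the transpositions that move the last factor,
   for a permutation-invariant rho the quantities (N+1) p_rho and (N+1) f_rho
   become the averages of L_k = (N+1-k) lam^k + k lam^(k-1) and F_k = (N+1-k) lam^k
   against the law of k = |A| under the weights tr (Pi_A rho); conversely every
   law on {0, ..., N+1} is realised by a mixture of normalised Pi_A.  What remains
   is a linear program in that law.  If delta <= lam^N, the point k = N+1 is
   feasible and has F = 0.  Otherwise the vertical gap between the points
   (L_k, F_k) and the line through k = k_* and k = k_* + 1 decreases up to k_*
   and increases afterwards, so the line is a lower bound f >= c + s p with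
   c < 0; a mixture of k_* and k_* + 1 with p_rho = delta attains it, and since
   c < 0 and p_rho >= delta the same bound controls f_rho / p_rho. *)

Lemma between_convex_comb (R : realFieldType) (lo hi z : R) :
  lo < hi -> lo <= z <= hi -> exists2 a, 0 <= a <= 1 & a * hi + (1 - a) * lo = z.
Proof.
move=> lt_lo_hi /andP[le_lo_z le_z_hi]; have hi_lo_gt0 : 0 < hi - lo by rewrite subr_gt0.
exists ((z - lo) / (hi - lo)).
  by rewrite divr_ge0 ?subr_ge0 ?(ltW lt_lo_hi) //= ler_pdivrMr // mul1r lerD2r.
by field; rewrite gt_eqF.
Qed.

Lemma le_at_sign_change (R : numDomainType) (u : nat -> R) k :
  (forall j, (j < k)%N -> u j.+1 <= u j) -> (forall j, (k <= j)%N -> u j <= u j.+1) ->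
  forall j, u k <= u j.
Proof.
move=> u_dec u_inc j; have [le_jk|le_kj] := leqP j k.
- have convex : {in [pred i | i <= k]%N &, forall a b m, a < m < b -> m <= k}%N.
    by move=> a b _ le_bk m /andP[_ /ltnW/leq_trans]; apply.
  have dec : {in [pred i | i <= k]%N, forall i, (i.+1 <= k)%N -> u i.+1 <= u i}.
    by move=> i _; apply: u_dec.
  exact: (nonincn_inP convex dec k j (leqnn k) le_jk le_jk).
- have convex : {in [pred i | k <= i]%N &, forall a b m, a < m < b -> k <= m}%N.
    by move=> a b le_ka _ m /andP[/ltnW/(leq_trans le_ka)].
  have inc : {in [pred i | k <= i]%N, forall i, (k <= i.+1)%N -> u i <= u i.+1}.
    by move=> i le_ki _; apply: u_inc.
  exact: (nondecn_inP convex inc k j (leqnn k) (ltnW le_kj) (ltnW le_kj)).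
Qed.

Lemma sum_enum_rank (T : finType) (V : nmodType) (F : 'I_#|T| -> V) :
  \sum_i F i = \sum_(a : T) F (enum_rank a).
Proof. by rewrite (reindex enum_rank) //; apply: onW_bij; apply: enum_rank_bij. Qed.

Lemma mxtrace_sum (V : pzRingType) m (I : Type) (r : seq I) (P : pred I)
    (F : I -> 'M[V]_m) :
  \tr (\sum_(i <- r | P i) F i) = \sum_(i <- r | P i) \tr (F i).
Proof. exact: raddf_sum. Qed.

Section TensorProduct.
Variables (R : realType) (D n : nat).
Local Notation C := R[i].

Lemma tensopE (M : 'I_n -> 'M[C]_D) (a b : midx D n) :
  tensop M (enum_rank a) (enum_rank b) = \prod_k M k (a k) (b k).
Proof. by rewrite /tensop mxE !enum_rankK. Qed.

Lemma eq_tensop (M M' : 'I_n -> 'M[C]_D) : M =1 M' -> tensop M = tensop M'.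
Proof.
by move=> eqM; apply/matrixP => i j; rewrite !mxE; apply: eq_bigr => k _; rewrite eqM.
Qed.

Lemma mulmx_tensop (A B : 'I_n -> 'M[C]_D) :
  tensop A *m tensop B = tensop (fun k => A k *m B k).
Proof.
apply/matrixP => i j; rewrite !mxE; under [RHS]eq_bigr do rewrite mxE.
rewrite bigA_distr_bigA sum_enum_rank; apply: eq_bigr => a _.
by rewrite !mxE enum_rankK -big_split.
Qed.

Lemma mxtrace_tensop (A : 'I_n -> 'M[C]_D) : \tr (tensop A) = \prod_k \tr (A k).
Proof.
rewrite /mxtrace sum_enum_rank bigA_distr_bigA; apply: eq_bigr => a _.
by rewrite mxE enum_rankK.
Qed.

Lemma tensop_id : tensop (fun _ => 1%:M) = 1%:M :> opT R D n.
Proof.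
apply/matrixP => i j; rewrite !mxE; have [<-|neq_ij] := eqVneq i j.
  by rewrite big1 // => k _; rewrite mxE eqxx.
have /existsP[k neq_k] : [exists k, enum_val i k != enum_val j k].
  apply: contraR neq_ij; rewrite negb_exists => /forallP eq_ij.
  by apply/eqP/enum_val_inj/ffunP => k; apply/eqP/negPn.
by rewrite (bigD1 k) //= mxE (negbTE neq_k) mul0r.
Qed.

Lemma tensopZ (c : 'I_n -> C) (M : 'I_n -> 'M[C]_D) :
  tensop (fun k => c k *: M k) = (\prod_k c k) *: tensop M.
Proof.
by apply/matrixP => i j; rewrite !mxE -big_split; apply: eq_bigr => k _; rewrite mxE.
Qed.

Lemma tensopD_expand (X Y : 'I_n -> 'M[C]_D) :
  tensop (fun k => X k + Y k) =
  \sum_(A : {set 'I_n}) tensop (fun k => if k \in A then X k else Y k).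
Proof.
apply/matrixP => i j; rewrite mxE summxE; under eq_bigr do rewrite mxE.
rewrite bigA_distr; apply: eq_bigr => A _; rewrite mxE.
by apply: eq_bigr => k _; case: (k \in A).
Qed.

Lemma tensop_eq0 (M : 'I_n -> 'M[C]_D) k : M k = 0 -> tensop M = 0.
Proof.
by move=> Mk0; apply/matrixP => i j; rewrite !mxE (bigD1 k) //= Mk0 mxE mul0r.
Qed.

Lemma adj_tensop (M : 'I_n -> 'M[C]_D) : adj (tensop M) = tensop (fun k => adj (M k)).
Proof.
apply/matrixP => i j; rewrite !mxE rmorph_prod.
by apply: eq_bigr => k _; rewrite !mxE.
Qed.

End TensorProduct.

Section Adjoint.
Variable R : realType.
Local Notation C := R[i].

Lemma adjE m n (A : 'M[C]_(m, n)) i j : adj A i j = (A j i)^*.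
Proof. by rewrite !mxE. Qed.

Lemma adj_mul m n p (A : 'M[C]_(m, n)) (B : 'M[C]_(n, p)) :
  adj (A *m B) = adj B *m adj A.
Proof. by rewrite /adj trmx_mul map_mxM. Qed.

Lemma adjK m n (A : 'M[C]_(m, n)) : adj (adj A) = A.
Proof. by apply/matrixP => i j; rewrite !adjE conjCK. Qed.

Lemma adj1 m : adj (1%:M : 'M[C]_m) = 1%:M.
Proof.
by apply/matrixP => i j; rewrite adjE !mxE eq_sym; case: (i == j); rewrite ?conjC0 ?conjC1.
Qed.

Lemma adjB m n (A B : 'M[C]_(m, n)) : adj (A - B) = adj A - adj B.
Proof. by apply/matrixP => i j; rewrite !mxE rmorphB. Qed.

Lemma adj_mul_self_ge0 m (u : 'cV[C]_m) : 0 <= (adj u *m u) 0 0.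
Proof.
by rewrite mxE; apply: sumr_ge0 => j _; rewrite adjE mulrC mul_conjC_ge0.
Qed.

Lemma quad_delta_mx m (M : 'M[C]_m) i :
  (adj (delta_mx i 0 : 'cV[C]_m) *m M *m (delta_mx i 0 : 'cV[C]_m)) 0 0 = M i i.
Proof.
have -> : adj (delta_mx i 0 : 'cV[C]_m) = delta_mx 0 i.
  apply/matrixP => a b; rewrite adjE !mxE.
  by case: (b == i); case: (a == 0); rewrite ?conjC0 ?conjC1.
by rewrite -rowE -colE !mxE.
Qed.

(* tr (P rho) = tr (P rho P) is a sum of diagonal entries of the positive matrix P rho P. *)
Lemma mxtrace_proj_mul_ge0 m (P rho : 'M[C]_m) :
  P *m P = P -> adj P = P ->
  (forall v : 'cV[C]_m, 0 <= (adj v *m rho *m v) 0 0) -> 0 <= \tr (P *m rho).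
Proof.
move=> P_idem P_adj rho_psd; rewrite -{1}P_idem -mulmxA mxtrace_mulC -mulmxA.
apply: sumr_ge0 => i _; rewrite -quad_delta_mx.
by have := rho_psd (P *m (delta_mx i 0 : 'cV[C]_m)); rewrite adj_mul P_adj !mulmxA.
Qed.

Lemma Re_realM (x : R) (z : C) : complex.Re ((x%:C)%C * z) = x * complex.Re z.
Proof. by case: z => a b /=; rewrite mul0r subr0. Qed.

Lemma Re_sum (I : Type) (r : seq I) (P : pred I) (F : I -> C) :
  complex.Re (\sum_(i <- r | P i) F i) = \sum_(i <- r | P i) complex.Re (F i).
Proof. exact: (raddf_sum (@complex.Re R : Rcomplex R -> R)). Qed.

Lemma Re_ge0 (z : C) : 0 <= z -> 0 <= complex.Re z.
Proof. by rewrite lecE => /andP[]. Qed.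

End Adjoint.

Section Projectors.
Variables (R : realType) (D : nat) (Psi : 'cV[R[i]]_D).
Hypothesis Psi_unit : unit_vector Psi.
Local Notation P := (proj Psi).

Definition proj_perp : 'M[R[i]]_D := 1%:M - P.
Local Notation Q := proj_perp.

Lemma adj_proj : adj P = P.
Proof. by rewrite adj_mul adjK. Qed.

Lemma adj_proj_perp : adj Q = Q.
Proof. by rewrite adjB adj1 adj_proj. Qed.

Lemma proj_idem : P *m P = P.
Proof.
have PsiK : adj Psi *m Psi = 1%:M by rewrite [adj Psi *m Psi]mx11_scalar Psi_unit.
by rewrite mulmxA -[P *m Psi]mulmxA PsiK mulmx1.
Qed.

Lemma proj_perp_idem : Q *m Q = Q.
Proof. by rewrite mulmxBl mul1mx mulmxBr mulmx1 proj_idem subrr subr0. Qed.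

Lemma proj_perp_proj : Q *m P = 0.
Proof. by rewrite mulmxBl mul1mx proj_idem subrr. Qed.

Lemma proj_proj_perp : P *m Q = 0.
Proof. by rewrite mulmxBr mulmx1 proj_idem subrr. Qed.

Lemma mxtrace_proj : \tr P = 1.
Proof. by rewrite mxtrace_mulC [adj Psi *m Psi]mx11_scalar Psi_unit mxtrace_scalar. Qed.

Lemma mxtrace_proj_perp : \tr Q = D%:R - 1.
Proof. by rewrite linearB /= mxtrace1 mxtrace_proj. Qed.

Variable n : nat.

Definition pattern_proj (A : {set 'I_n}) : opT R D n :=
  tensop (fun k => if k \in A then Q else P).

Lemma adj_pattern_proj A : adj (pattern_proj A) = pattern_proj A.
Proof.
by rewrite adj_tensop; apply: eq_tensop => k; case: (k \in A); rewrite ?adj_proj_perp ?adj_proj.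
Qed.

Lemma pattern_proj_idem A : pattern_proj A *m pattern_proj A = pattern_proj A.
Proof.
rewrite mulmx_tensop; apply: eq_tensop => k.
by case: (k \in A); rewrite ?proj_perp_idem ?proj_idem.
Qed.

Lemma pattern_proj_orth A B : A != B -> pattern_proj A *m pattern_proj B = 0.
Proof.
move=> neq_AB; rewrite mulmx_tensop.
have /existsP[k neq_k] : [exists k, (k \in A) != (k \in B)].
  apply: contraR neq_AB; rewrite negb_exists => /forallP eq_AB.
  by apply/eqP/setP => k; apply/eqP/negPn.
apply: (tensop_eq0 (k := k)).
by move: neq_k; case: (k \in A); case: (k \in B); rewrite ?proj_perp_proj ?proj_proj_perp.
Qed.

Lemma mxtrace_pattern_proj A : \tr (pattern_proj A) = (D%:R - 1) ^+ #|A|.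
Proof.
rewrite mxtrace_tensop (bigID (mem A)) /= [X in _ * X]big1 => [|k /negbTE ->]; last first.
  exact: mxtrace_proj.
rewrite mulr1 (eq_bigr (fun _ => D%:R - 1)) ?prodr_const // => k ->.
exact: mxtrace_proj_perp.
Qed.

Lemma sum_pattern_proj : \sum_(A : {set 'I_n}) pattern_proj A = 1%:M.
Proof. by rewrite -tensopD_expand -tensop_id; apply: eq_tensop => k; rewrite subrK. Qed.

End Projectors.

(* [kstar_lhs N k lam] and [fid_weight N k lam] are N+1 times p_rho and f_rho of a
   permutation-invariant state supported on the patterns A with |A| = k. *)
Definition fid_weight (R : realType) (N k : nat) (lam : R) : R :=
  (N.+1%:R - k%:R) * lam ^+ k.

Definition zeta_slope (R : realType) (N k : nat) (lam : R) : R :=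
  lam * (1 + (N%:R - k%:R) * (1 - lam)) / ((1 - lam) * (k%:R * (1 - lam) + N%:R * lam)).

Definition zeta_icept (R : realType) (N k : nat) (lam : R) : R :=
  - lam ^+ k.+1 / ((1 - lam) * (k%:R * (1 - lam) + N%:R * lam)).

Section KstarLhs.
Variables (R : realType) (N : nat) (lam : R).

Lemma kstar_lhsE k :
  kstar_lhs N k lam = k%:R * lam ^+ k.-1 + fid_weight N k lam.
Proof. by rewrite /kstar_lhs /fid_weight; case: k => [|k] /=; rewrite ?expr0; ring. Qed.

Lemma kstar_lhs_Nplus1 : kstar_lhs N N.+1 lam = N.+1%:R * lam ^+ N.
Proof. by rewrite kstar_lhsE /fid_weight subrr mul0r addr0. Qed.

Lemma fid_weight_Nplus1 : fid_weight N N.+1 lam = 0.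
Proof. by rewrite /fid_weight subrr mul0r. Qed.

Lemma fid_weight_ge0 k : 0 <= lam -> (k <= N.+1)%N -> 0 <= fid_weight N k lam.
Proof. by move=> lam_ge0 le_kN; rewrite mulr_ge0 ?exprn_ge0 // subr_ge0 ler_nat. Qed.

Lemma kstar_lhs_step k :
  lam * (kstar_lhs N k lam - kstar_lhs N k.+1 lam) =
  (1 - lam) * lam ^+ k * (N%:R * lam + k%:R * (1 - lam)).
Proof. by rewrite /kstar_lhs; case: k => [|k] /=; rewrite ?expr0 ?expr1 ?exprS; ring. Qed.

Hypotheses (lam_gt0 : 0 < lam) (lam_lt1 : lam < 1).

Lemma kstar_lhs_antimono j k : (j <= k)%N -> kstar_lhs N k lam <= kstar_lhs N j lam.
Proof.
have step i : kstar_lhs N i.+1 lam <= kstar_lhs N i lam.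
  have [lam_ge0 nu_ge0] : 0 <= lam /\ 0 <= 1 - lam by rewrite subr_ge0 !ltW.
  rewrite -subr_ge0 -(pmulr_rge0 _ lam_gt0) kstar_lhs_step.
  by rewrite mulr_ge0 ?mulr_ge0 ?exprn_ge0 // addr_ge0 ?mulr_ge0 ?ler0n.
exact: (nonincnP step k j).
Qed.

End KstarLhs.

Section SupportLine.
Variables (R : realType) (N k : nat) (lam : R).
Hypotheses (N_gt0 : (0 < N)%N) (lam_gt0 : 0 < lam) (lam_lt1 : lam < 1).
Local Notation gap j := (fid_weight N j lam - zeta_slope N k lam * kstar_lhs N j lam).

Let nu_gt0 : 0 < 1 - lam. Proof. by rewrite subr_gt0. Qed.

Let inner_gt0 : 0 < k%:R * (1 - lam) + N%:R * lam.
Proof. by rewrite ltr_wpDl ?mulr_ge0 ?ler0n ?ltW ?mulr_gt0 ?ltr0n. Qed.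

Lemma zeta_kE delta : zeta_k N delta lam k = zeta_icept N k lam + zeta_slope N k lam * delta.
Proof. by rewrite /zeta_k /zeta_icept /zeta_slope exprS /=; field; rewrite !gt_eqF. Qed.

Lemma zeta_icept_lt0 : zeta_icept N k lam < 0.
Proof. by rewrite /zeta_icept mulNr oppr_lt0 divr_gt0 ?exprn_gt0 ?mulr_gt0. Qed.

Lemma zeta_slope_ge0 : (k <= N)%N -> 0 <= zeta_slope N k lam.
Proof.
move=> le_kN; have num_ge0 : 0 <= 1 + (N%:R - k%:R) * (1 - lam).
  by rewrite addr_ge0 // mulr_ge0 ?(ltW nu_gt0) // subr_ge0 ler_nat.
by rewrite divr_ge0 ?mulr_ge0 ?(ltW lam_gt0) ?(ltW nu_gt0) ?(ltW inner_gt0).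
Qed.

(* The increments of the gap have the sign of j - k, so the gap is smallest at k. *)
Let gap_step j :
  gap j.+1 - gap j =
  N.+1%:R * lam ^+ j * (1 - lam) * (j%:R - k%:R) / (k%:R * (1 - lam) + N%:R * lam).
Proof.
rewrite /fid_weight /zeta_slope /kstar_lhs /=.
by case: j => [|j] /=; rewrite ?expr0 ?expr1 ?exprS; field; rewrite !gt_eqF ?ltr0n.
Qed.

Let gap_k : gap k = N.+1%:R * zeta_icept N k lam.
Proof.
rewrite /fid_weight /zeta_slope /zeta_icept /kstar_lhs.
move: inner_gt0; case: k => [|j] inner /=; rewrite ?expr0 ?expr1 ?exprS; field.
  by rewrite !gt_eqF ?ltr0n.
by rewrite [1 + _]addrC natr1 !gt_eqF.
Qed.

Let gap_k_succ : gap k.+1 = gap k.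
Proof. by apply/eqP; rewrite -subr_eq0 gap_step subrr !mulr0 mul0r. Qed.

Lemma support_line_le j :
  N.+1%:R * zeta_icept N k lam + zeta_slope N k lam * kstar_lhs N j lam <= fid_weight N j lam.
Proof.
rewrite -gap_k -lerBrDr.
have pos i : 0 < N.+1%:R * lam ^+ i * (1 - lam) by rewrite !mulr_gt0 ?exprn_gt0 ?ltr0n.
apply: (le_at_sign_change (u := fun j => gap j)) => i le_ik.
  by rewrite -subr_le0 gap_step pmulr_lle0 ?invr_gt0 // pmulr_rle0 // subr_le0 ler_nat ltnW.
rewrite -subr_ge0 gap_step divr_ge0 ?(ltW inner_gt0) // mulr_ge0 ?(ltW (pos i)) //.
by rewrite subr_ge0 ler_nat.
Qed.

Lemma support_line_eq j : (j == k) || (j == k.+1) ->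
  N.+1%:R * zeta_icept N k lam + zeta_slope N k lam * kstar_lhs N j lam = fid_weight N j lam.
Proof.
case/orP => /eqP ->; first by rewrite -gap_k subrK.
by rewrite -gap_k -gap_k_succ subrK.
Qed.

End SupportLine.

Section PatternProbabilities.
Variables (R : realType) (D : nat) (Psi : 'cV[R[i]]_D) (n : nat).
Local Notation P := (proj Psi).
Local Notation Q := (proj_perp Psi).

Definition pattern_prob (rho : opT R D n) (A : {set 'I_n}) : R :=
  complex.Re (\tr (pattern_proj Psi A *m rho)).

Lemma Re_mxtrace_tensop_expand (c : 'I_n -> R) (rho : opT R D n) :
  complex.Re (\tr (tensop (fun k => P + ((c k)%:C)%C *: Q) *m rho)) =
  \sum_(A : {set 'I_n}) (\prod_(k in A) c k) * pattern_prob rho A.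
Proof.
rewrite (eq_tensop (M' := fun k => ((c k)%:C)%C *: Q + P)) => [|k]; last exact: addrC.
rewrite tensopD_expand mulmx_suml mxtrace_sum Re_sum.
apply: eq_bigr => A _; rewrite -Re_realM rmorph_prod big_mkcond /= -mxtraceZ scalemxAl -tensopZ.
congr (complex.Re (\tr (_ *m _))); apply: eq_tensop => k /=.
by case: (k \in A); rewrite ?scale1r.
Qed.

Lemma pattern_prob_perm (rho : opT R D n) : perm_invariant rho ->
  forall (s : 'S_n) (A : {set 'I_n}), pattern_prob rho (s @: A) = pattern_prob rho A.
Proof.
pose act (s : 'S_n) (a : midx D n) : midx D n := [ffun k => a (s k)].
have act_inj s : injective (act s).
  by move=> a b /ffunP eq_ab; apply/ffunP => k; have := eq_ab (s^-1 k)%g; rewrite !ffunE permKV.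
move=> rho_inv s A; congr complex.Re; rewrite /mxtrace !sum_enum_rank.
rewrite [RHS](reindex_inj (act_inj s)); apply: eq_bigr => a _.
rewrite !mxE !sum_enum_rank [RHS](reindex_inj (act_inj s)); apply: eq_bigr => b _.
rewrite (rho_inv s b a) !tensopE (reindex_inj (@perm_inj _ s)); congr (_ * _).
by apply: eq_bigr => k _; rewrite mem_imset ?ffunE //; apply: perm_inj.
Qed.

Lemma sum_pattern_prob (rho : opT R D n) :
  density_op rho -> \sum_(A : {set 'I_n}) pattern_prob rho A = 1.
Proof.
case=> _ _ tr_rho; rewrite -Re_sum -mxtrace_sum.
by rewrite -mulmx_suml sum_pattern_proj mul1mx tr_rho.
Qed.

Hypothesis Psi_unit : unit_vector Psi.

Lemma pattern_prob_ge0 (rho : opT R D n) A : density_op rho -> 0 <= pattern_prob rho A.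
Proof.
case=> _ rho_psd _; apply/Re_ge0/mxtrace_proj_mul_ge0 => //.
  exact: pattern_proj_idem.
exact: adj_pattern_proj.
Qed.

End PatternProbabilities.

Section Symmetrization.
Variables (R : realType) (D : nat) (Psi : 'cV[R[i]]_D) (N : nat) (lam : R).
Local Notation n := N.+1.
Local Notation P := (proj Psi).
Local Notation Q := (proj_perp Psi).

(* Omega = P + lam Q sits on the first N factors and X = P + x Q on the last one. *)
Definition omega_coef (x : R) (k : 'I_n) : R := if (k < N)%N then lam else x.

Lemma OmN_tens_coef (x : R) :
  OmN_tens Psi lam N (P + (x%:C)%C *: Q) = tensop (fun k => P + ((omega_coef x k)%:C)%C *: Q).
Proof. by apply: eq_tensop => k; rewrite /omega_coef; case: (k < N)%N. Qed.

(* Conjugating by the transposition (r N) moves the last factor to position r. *)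
Lemma sum_tperm_average (g t : {set 'I_n} -> R) :
  (forall (s : 'S_n) (A : {set 'I_n}), t (s @: A) = t A) ->
  N.+1%:R * \sum_(A : {set 'I_n}) g A * t A =
  \sum_(A : {set 'I_n}) (\sum_(r < n) g (tperm r ord_max @: A)) * t A.
Proof.
move=> t_inv.
have reindex_tperm r : \sum_(A : {set 'I_n}) g A * t A =
                       \sum_(A : {set 'I_n}) g (tperm r ord_max @: A) * t A.
  rewrite (reindex_inj (imset_inj (@perm_inj _ (tperm r ord_max)))) /=.
  by apply: eq_bigr => A _; rewrite t_inv.
transitivity (\sum_(r < n) \sum_(A : {set 'I_n}) g A * t A).
  by rewrite sumr_const card_ord mulr_natl.
rewrite (eq_bigr _ (fun r _ => reindex_tperm r)) exchange_big /=.
by apply: eq_bigr => A _; rewrite mulr_suml.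
Qed.

Lemma prod_omega_coef_tperm x (A : {set 'I_n}) (r : 'I_n) :
  \prod_(k in tperm r ord_max @: A) omega_coef x k =
  if r \in A then x * lam ^+ #|A|.-1 else lam ^+ #|A|.
Proof.
have omega_tperm k : omega_coef x (tperm r ord_max k) = if k == r then x else lam.
  have lt_N (i : 'I_n) : (i < N)%N = (i != ord_max).
    by rewrite -val_eqE /= ltn_neqAle -ltnS ltn_ord andbT.
  rewrite /omega_coef lt_N -[X in _ != X](tpermL r ord_max) (inj_eq (@perm_inj _ _)).
  by case: eqP.
rewrite big_imset /=; last by move=> ? ? _ _; apply: perm_inj.
under eq_bigr do rewrite omega_tperm.
case: ifP => rA.
  rewrite (bigD1 r) //= eqxx (eq_bigr (fun=> lam)) => [|k /andP[_ /negbTE ->] //].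
  rewrite prodr_const (cardD1 r A) rA; congr (_ * _ ^+ _).
  by apply: eq_card => k; rewrite !inE andbC.
rewrite (eq_bigr (fun=> lam)) ?prodr_const // => k kA.
by case: eqP kA => // ->; rewrite rA.
Qed.

Lemma sum_prod_omega_coef_tperm x (A : {set 'I_n}) :
  \sum_(r < n) \prod_(k in tperm r ord_max @: A) omega_coef x k =
  x * (#|A|%:R * lam ^+ #|A|.-1) + fid_weight N #|A| lam.
Proof.
under eq_bigr do rewrite prod_omega_coef_tperm.
set a := x * _; set b := lam ^+ _.
rewrite (eq_bigr (fun r => b + (if r \in A then a - b else 0))) => [|r _]; last first.
  by case: ifP; rewrite ?addr0 // addrC subrK.
rewrite big_split /= -big_mkcond !sumr_const card_ord.
by rewrite -[b *+ _]mulr_natr -[(a - b) *+ _]mulr_natr /fid_weight /a /b; ring.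
Qed.

Lemma symmetrized_expansion x (rho : opT R D n) : perm_invariant rho ->
  N.+1%:R * complex.Re (\tr (OmN_tens Psi lam N (P + (x%:C)%C *: Q) *m rho)) =
  \sum_(A : {set 'I_n})
    (x * (#|A|%:R * lam ^+ #|A|.-1) + fid_weight N #|A| lam) * pattern_prob Psi rho A.
Proof.
move=> rho_inv; rewrite OmN_tens_coef Re_mxtrace_tensop_expand sum_tperm_average.
  by apply: eq_bigr => A _; rewrite sum_prod_omega_coef_tperm.
exact: pattern_prob_perm.
Qed.

Lemma p_rho_symmetrized (rho : opT R D n) : perm_invariant rho ->
  N.+1%:R * p_rho Psi lam rho =
  \sum_(A : {set 'I_n}) kstar_lhs N #|A| lam * pattern_prob Psi rho A.
Proof.
have P_add_Q : P + (1%:C)%C *: Q = 1%:M by rewrite rmorph1 scale1r addrC subrK.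
move=> rho_inv; rewrite /p_rho -P_add_Q symmetrized_expansion //.
by apply: eq_bigr => A _; rewrite mul1r kstar_lhsE.
Qed.

Lemma f_rho_symmetrized (rho : opT R D n) : perm_invariant rho ->
  N.+1%:R * f_rho Psi lam rho =
  \sum_(A : {set 'I_n}) fid_weight N #|A| lam * pattern_prob Psi rho A.
Proof.
have P_add_0 : P + (0%:C)%C *: Q = P by rewrite rmorph0 scale0r addr0.
move=> rho_inv; rewrite /f_rho -[in OmN_tens _ _ _ P]P_add_0 symmetrized_expansion //.
by apply: eq_bigr => A _; rewrite mul0r add0r.
Qed.

Hypothesis Psi_unit : unit_vector Psi.

Lemma f_rho_ge_affine (c s : R) (rho : opT R D n) :
  density_op rho -> perm_invariant rho ->
  (forall j, (j <= N.+1)%N -> N.+1%:R * c + s * kstar_lhs N j lam <= fid_weight N j lam) ->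
  c + s * p_rho Psi lam rho <= f_rho Psi lam rho.
Proof.
move=> rho_dens rho_inv line_le; rewrite -(ler_pM2l (ltr0Sn _ N)) mulrDr mulrCA.
rewrite p_rho_symmetrized // f_rho_symmetrized // -[c]mulr1.
rewrite -[X in c * X](sum_pattern_prob Psi rho_dens) !mulr_sumr -big_split /=.
apply: ler_sum => A _; rewrite !mulrA -mulrDl ler_wpM2r ?pattern_prob_ge0 //.
by apply: line_le; rewrite -[X in (_ <= X)%N]card_ord max_card.
Qed.

End Symmetrization.

Section PatternState.
Variables (R : realType) (D : nat) (Psi : 'cV[R[i]]_D) (n : nat).
Hypotheses (Psi_unit : unit_vector Psi) (D_ge2 : (2 <= D)%N).
Variable x : {set 'I_n} -> R.

(* Each pattern projector has trace (D - 1)^|B|, hence the normalisation. *)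
Definition pattern_state : opT R D n :=
  \sum_(B : {set 'I_n}) ((x B)%:C / (D%:R - 1) ^+ #|B|)%C *: pattern_proj Psi B.

Let dim_gt0 : 0 < D%:R - 1 :> R[i].
Proof. by rewrite subr_gt0 (_ : 1 = 1%:R) // ltr_nat. Qed.

Let mxtrace_weighted_proj B :
  \tr (((x B)%:C / (D%:R - 1) ^+ #|B|)%C *: pattern_proj Psi B) = (x B)%:C%C.
Proof. by rewrite mxtraceZ mxtrace_pattern_proj // divfK // expf_neq0 // gt_eqF. Qed.

Lemma pattern_prob_state A : pattern_prob Psi pattern_state A = x A.
Proof.
rewrite /pattern_prob mulmx_sumr mxtrace_sum (bigD1 A) //= big1 => [|B neq_BA].
  by rewrite addr0 -scalemxAr pattern_proj_idem // mxtrace_weighted_proj.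
by rewrite -scalemxAr pattern_proj_orth // 1?eq_sym // scaler0 mxtrace0.
Qed.

Lemma pattern_state_density :
  (forall A, 0 <= x A) -> \sum_A x A = 1 -> density_op pattern_state.
Proof.
move=> x_ge0 x_sum1.
have w_ge0 B : 0 <= ((x B)%:C / (D%:R - 1) ^+ #|B|)%C.
  by rewrite divr_ge0 ?ler0c ?exprn_ge0 // ltW.
split.
- apply/matrixP => i j; rewrite adjE !summxE rmorph_sum; apply: eq_bigr => B _.
  have scaleE a (M : opT R D n) k l : (a *: M) k l = a * M k l by rewrite mxE.
  rewrite !scaleE rmorphM; congr (_ * _); first exact: conj_Creal (ger0_real (w_ge0 B)).
  by have /matrixP/(_ i j) := adj_pattern_proj Psi B; rewrite adjE.
- move=> v; rewrite mulmx_sumr mulmx_suml summxE; apply: sumr_ge0 => B _.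
  rewrite -scalemxAr -scalemxAl mxE mulr_ge0 //.
  rewrite -(pattern_proj_idem Psi_unit) -{1}adj_pattern_proj !mulmxA -adj_mul -mulmxA.
  exact: adj_mul_self_ge0.
- rewrite mxtrace_sum (eq_bigr _ (fun B _ => mxtrace_weighted_proj B)).
  by rewrite -rmorph_sum x_sum1 rmorph1.
Qed.

Lemma pattern_state_perm_invariant :
  (forall (s : 'S_n) (A : {set 'I_n}), x (s @: A) = x A) -> perm_invariant pattern_state.
Proof.
move=> x_inv s a b; rewrite !summxE (reindex_inj (imset_inj (@perm_inj _ s))) /=.
apply: eq_bigr => B _; rewrite !mxE x_inv card_imset; last exact: perm_inj.
rewrite !enum_rankK (reindex_inj (@perm_inj _ s)); congr (_ * _); apply: eq_bigr => k _.
by rewrite mem_imset ?ffunE //; apply: perm_inj.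
Qed.

End PatternState.

Section Layers.
Variables (R : realType) (N : nat).
Local Notation n := N.+1.

Definition layer_dist (j : nat) (A : {set 'I_n}) : R := (#|A| == j)%:R / 'C(n, j)%:R.

Lemma layer_dist_ge0 j A : 0 <= layer_dist j A.
Proof. by rewrite divr_ge0 ?ler0n. Qed.

Lemma layer_dist_perm j (s : 'S_n) (A : {set 'I_n}) : layer_dist j (s @: A) = layer_dist j A.
Proof. by rewrite /layer_dist card_imset //; apply: perm_inj. Qed.

Lemma sum_layer_dist (G : nat -> R) j : (j <= n)%N ->
  \sum_(A : {set 'I_n}) G #|A| * layer_dist j A = G j.
Proof.
move=> le_jn; have binom_neq0 : 'C(n, j)%:R != 0 :> R by rewrite pnatr_eq0 -lt0n bin_gt0.
rewrite (bigID (fun A : {set 'I_n} => #|A| == j)) /= [X in _ + X]big1 => [|A /negbTE]; last first.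
  by rewrite /layer_dist => ->; rewrite mul0r mulr0.
rewrite addr0 (eq_bigr (fun=> G j / 'C(n, j)%:R)) => [|A /eqP <-]; last first.
  by rewrite /layer_dist eqxx mul1r.
rewrite sumr_const (eq_card (B := [set A : {set 'I_n} | #|A| == j])) => [|A]; last by rewrite inE.
by rewrite card_draws card_ord -[_ *+ _]mulr_natr divfK.
Qed.

End Layers.
Arguments layer_dist : clear implicits.

Section TwoLayerStates.
Variables (R : realType) (D : nat) (Psi : 'cV[R[i]]_D) (N : nat) (lam : R).
Hypotheses (Psi_unit : unit_vector Psi) (D_ge2 : (2 <= D)%N).

Lemma exists_two_layer_state (a : R) (j1 j2 : nat) :
  0 <= a <= 1 -> (j1 <= N.+1)%N -> (j2 <= N.+1)%N ->
  exists rho : opT R D N.+1, [/\ density_op rho, perm_invariant rho,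
    N.+1%:R * p_rho Psi lam rho = a * kstar_lhs N j1 lam + (1 - a) * kstar_lhs N j2 lam &
    N.+1%:R * f_rho Psi lam rho = a * fid_weight N j1 lam + (1 - a) * fid_weight N j2 lam].
Proof.
move=> /andP[a_ge0 a_le1] le_j1 le_j2.
pose x A := a * layer_dist R N j1 A + (1 - a) * layer_dist R N j2 A.
have sum_x (G : nat -> R) : \sum_(A : {set 'I_N.+1}) G #|A| * x A = a * G j1 + (1 - a) * G j2.
  under eq_bigr do rewrite mulrDr (mulrCA (G _) a) (mulrCA (G _) (1 - a)).
  by rewrite big_split /= -!mulr_sumr !sum_layer_dist.
have x_perm (s : 'S_N.+1) (A : {set 'I_N.+1}) : x (s @: A) = x A by rewrite /x !layer_dist_perm.
have x_inv := pattern_state_perm_invariant Psi x_perm.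
exists (pattern_state Psi x); split => //.
- apply: pattern_state_density => // [A|].
    by apply: addr_ge0; apply: mulr_ge0; rewrite ?layer_dist_ge0 ?subr_ge0.
  have := sum_x (fun=> 1); rewrite !mulr1 addrC subrK => <-.
  by apply: eq_bigr => A _; rewrite mul1r.
- rewrite p_rho_symmetrized // -(sum_x (kstar_lhs N ^~ lam)); apply: eq_bigr => A _.
  by rewrite pattern_prob_state.
- rewrite f_rho_symmetrized // -(sum_x (fid_weight N ^~ lam)); apply: eq_bigr => A _.
  by rewrite pattern_prob_state.
Qed.

End TwoLayerStates.

Section Optimum.
Variables (R : realType) (D : nat) (Psi : 'cV[R[i]]_D) (N : nat) (lam delta : R).
Hypothesis delta_gt0 : 0 < delta.

(* For the ratio: c <= 0 and p_rho >= delta give (c + s p_rho) / p_rho >= (c + s delta) / delta. *)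
Lemma IsMin_zeta_F_affine (c s : R) (rho0 : opT R D N.+1) :
  c <= 0 -> 0 <= s -> feasible Psi lam delta rho0 ->
  f_rho Psi lam rho0 = c + s * delta ->
  f_rho Psi lam rho0 / p_rho Psi lam rho0 = (c + s * delta) / delta ->
  (forall rho : opT R D N.+1, feasible Psi lam delta rho ->
     c + s * p_rho Psi lam rho <= f_rho Psi lam rho) ->
  IsMin (zeta_values Psi lam N delta) (c + s * delta) /\
  IsMin (F_values Psi lam N delta) ((c + s * delta) / delta).
Proof.
move=> c_le0 s_ge0 feas0 f0 ratio0 lower.
split; split; [by exists rho0 | | by exists rho0 |].
- move=> _ [rho [feas ->]]; apply: le_trans (lower _ feas).
  by case: feas => _ _ le_delta_p; rewrite lerD2l ler_wpM2l.
- move=> _ [rho [feas ->]]; have := lower _ feas; case: feas => _ _ le_delta_p f_ge.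
  have p_gt0 := lt_le_trans delta_gt0 le_delta_p.
  rewrite ler_pdivlMr // mulrAC ler_pdivrMr //.
  have : 0 <= (f_rho Psi lam rho - (c + s * p_rho Psi lam rho)) * delta.
    by rewrite mulr_ge0 ?subr_ge0 // ltW.
  have : 0 <= - c * (p_rho Psi lam rho - delta) by rewrite mulr_ge0 ?oppr_ge0 ?subr_ge0.
  nra.
Qed.

End Optimum.

Section Cases.
Variables (R : realType) (D : nat) (Psi : 'cV[R[i]]_D) (N : nat) (lam delta : R).
Hypotheses (D_ge2 : (2 <= D)%N) (Psi_unit : unit_vector Psi) (N_gt0 : (0 < N)%N).
Hypotheses (lam_gt0 : 0 < lam) (lam_lt1 : lam < 1) (delta_gt0 : 0 < delta).

Let Nplus1_neq0 : N.+1%:R != 0 :> R. Proof. by rewrite pnatr_eq0. Qed.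

(* Witness: the state supported on the pattern A = {0, ..., N}, with p_rho = lam^N and f_rho = 0. *)
Lemma zeta_F_small_delta : delta <= lam ^+ N ->
  IsMin (zeta_values Psi lam N delta) 0 /\ IsMin (F_values Psi lam N delta) (0 / delta).
Proof.
move=> small.
have one01 : 0 <= (1 : R) <= 1 by rewrite ler01 lexx.
have [rho [rho_dens rho_inv p_eq f_eq]] :=
  exists_two_layer_state lam Psi_unit D_ge2 one01 (leqnn N.+1) (leqnn N.+1).
rewrite subrr !mul0r !addr0 !mul1r kstar_lhs_Nplus1 fid_weight_Nplus1 in p_eq f_eq.
have f0 : f_rho Psi lam rho = 0 by apply: (mulfI Nplus1_neq0); rewrite mulr0.
have := IsMin_zeta_F_affine (c := 0) (s := 0) delta_gt0 (lexx 0) (lexx 0) (rho0 := rho).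
rewrite mul0r addr0; apply => //.
- by split => //; rewrite (mulfI Nplus1_neq0 p_eq).
- by rewrite f0 !mul0r.
- move=> r [r_dens r_inv _]; apply: f_rho_ge_affine => // j le_j.
  by rewrite mulr0 mul0r addr0 fid_weight_ge0 ?ltW.
Qed.

Lemma kstar_le_N ks : lam ^+ N < delta -> is_kstar N delta lam ks -> (ks <= N)%N.
Proof.
move=> large [ks_ok _]; rewrite leqNgt; apply/negP => lt_N_ks.
have := le_trans ks_ok (kstar_lhs_antimono N lam_gt0 lam_lt1 lt_N_ks).
by rewrite kstar_lhs_Nplus1 ler_pM2l ?ltr0Sn // leNgt large.
Qed.

(* Witness: the mixture of the layers k_* and k_* + 1 with p_rho = delta; both layers lie on
   the support line. *)
Lemma zeta_F_large_delta ks : lam ^+ N < delta -> is_kstar N delta lam ks ->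
  IsMin (zeta_values Psi lam N delta) (zeta_k N delta lam ks) /\
  IsMin (F_values Psi lam N delta) (zeta_k N delta lam ks / delta).
Proof.
move=> large kstarP; have le_ksN := kstar_le_N large kstarP.
case: kstarP => ks_ok ks_max.
have succ_lt : kstar_lhs N ks.+1 lam < N.+1%:R * delta.
  by rewrite ltNge; apply/negP => /ks_max; rewrite ltnn.
have [a a01 mix] := between_convex_comb (lt_le_trans succ_lt ks_ok)
  (introT andP (conj (ltW succ_lt) ks_ok)).
have [rho [rho_dens rho_inv p_eq f_eq]] :=
  exists_two_layer_state lam Psi_unit D_ge2 (j2 := ks.+1) a01 (leqW le_ksN) le_ksN.
rewrite mix in p_eq; have p_delta := mulfI Nplus1_neq0 p_eq.
set c := zeta_icept N ks lam; set s := zeta_slope N ks lam.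
have f_line : f_rho Psi lam rho = c + s * delta.
  apply: (mulfI Nplus1_neq0); rewrite f_eq.
  have at_ks : (ks == ks) || (ks == ks.+1) by rewrite eqxx.
  have at_succ : (ks.+1 == ks) || (ks.+1 == ks.+1) by rewrite eqxx orbT.
  rewrite -(support_line_eq N_gt0 lam_gt0 lam_lt1 at_ks).
  rewrite -(support_line_eq N_gt0 lam_gt0 lam_lt1 at_succ).
  transitivity
    (N.+1%:R * c + s * (a * kstar_lhs N ks lam + (1 - a) * kstar_lhs N ks.+1 lam)).
    by rewrite /c /s; ring.
  by rewrite mix; ring.
rewrite (zeta_kE ks N_gt0 lam_gt0 lam_lt1).
apply: (IsMin_zeta_F_affine delta_gt0 (rho0 := rho)) => //.
- exact: ltW (zeta_icept_lt0 ks N_gt0 lam_gt0 lam_lt1).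
- exact: zeta_slope_ge0.
- by split => //; rewrite p_delta.
- by rewrite f_line p_delta.
- move=> r [r_dens r_inv _]; apply: f_rho_ge_affine => // j _.
  exact: support_line_le.
Qed.

End Cases.

Theorem theorem1 (R : realType) (D : nat) (Psi : 'cV[R[i]]_D)
    (N : nat) (lam delta : R) (ks : nat) :
  (2 <= D)%N -> unit_vector Psi ->
  (1 <= N)%N -> 0 < lam -> lam < 1 -> 0 < delta -> delta <= 1 ->
  is_kstar N delta lam ks ->
  IsMin (zeta_values Psi lam N delta) (zeta_formula N delta lam ks) /\
  IsMin (F_values Psi lam N delta) (zeta_formula N delta lam ks / delta).
Proof.
move=> D_ge2 Psi_unit N_gt0 lam_gt0 lam_lt1 delta_gt0 _ kstarP.
rewrite /zeta_formula; case: leP => [small|large].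
  exact: zeta_F_small_delta.
exact: zeta_F_large_delta.
Qed.
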